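(* Let $X$ and $Y$ be Hausdorff spaces with $X$ locally compact, and let $f:\mathrm{Closed}(X)\to\mathrm{Closed}(Y)$ be admissible. Then $X+_fY$ is Hausdorff if and only if $f(K)=\emptyset$ for every compact $K\subseteq X$ and, for all distinct $a,b\in Y$, there exist $A,B\in\mathrm{Closed}(X)$ with $A\cup B=X$, $b\notin f(A)$ and $a\notin f(B)$.
   Context: $\mathrm{Closed}(X)$ is the set of closed subsets of $X$. $f:\mathrm{Closed}(X)\to\mathrm{Closed}(Y)$ is admissible if $f(\emptyset)=\emptyset$ and $f(A_1\cup A_2)=f(A_1)\cup f(A_2)$. $X+_fY$ is the set $X\sqcup Y$ with the topology whose closed sets are the $D$ with $D\cap X$ closed in $X$, $D\cap Y$ closed in $Y$ and $f(D\cap X)\subseteq D$. *)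

From HB Require Import structures.
From mathcomp Require Import all_boot all_order.
From mathcomp Require Import all_classical all_reals all_analysis.
Set Implicit Arguments. Unset Strict Implicit. Unset Printing Implicit Defensive.
Local Open Scope classical_set_scope.

Section Glue.
Variables X Y : topologicalType.

(* A map Closed(X) -> Closed(Y) is represented by f : set X -> set Y; only
   its values on closed sets matter.  Admissibility includes that f sends
   closed sets to closed sets. *)
Definition admissible (f : set X -> set Y) : Prop :=
  [/\ (forall A, closed A -> closed (f A)),
      f set0 = set0 &
      (forall A1 A2, closed A1 -> closed A2 -> f (A1 `|` A2) = f A1 `|` f A2)].

Record admissible_map := AdmissibleMap {
  amap :> set X -> set Y;
  amapP : admissible amap }.

Definition glue_closed (f : set X -> set Y) (D : set (X + Y)%type) : Prop :=
  [/\ closed (inl @^-1` D), closed (inr @^-1` D) &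
      f (inl @^-1` D) `<=` inr @^-1` D].

Definition plus_f (f : admissible_map) : Type := (X + Y)%type.

Variable f : admissible_map.

HB.instance Definition _ := Choice.on (plus_f f).

Let op (U : set (plus_f f)) := glue_closed f (~` U).

Let amap_mono (A B : set X) : closed A -> closed B -> A `<=` B -> f A `<=` f B.
Proof.
move=> cA cB AB; have [_ _ fU] := amapP f.
have -> : B = A `|` B by rewrite setUidr.
by rewrite fU //; apply: subsetUl.
Qed.

Let opT : op setT.
Proof.
have [_ f0 _] := amapP f.
rewrite /op /glue_closed setCT !preimage_set0 f0; split => //; exact: closed0.
Qed.

Let opI : setI_closed op.
Proof.
move=> U V [cU1 cU2 fU] [cV1 cV2 fV]; rewrite /op /glue_closed setCI !preimage_setU.
have [_ _ fD] := amapP f.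
split; [exact: closedU|exact: closedU|].
rewrite fD //; move=> y [/fU|/fV]; by [left|right].
Qed.

Let op_bigU (I : Type) (g : I -> set (plus_f f)) : (forall i, op (g i)) ->
  op (\bigcup_i g i).
Proof.
move=> hg; rewrite /op /glue_closed setC_bigcup !preimage_bigcap.
split; [apply: closed_bigI => i _; by case: (hg i)|
        apply: closed_bigI => i _; by case: (hg i)|].
move=> y fy i _; have [c1 c2 fi] := hg i; apply: fi.
apply: (amap_mono _ c1 _ fy); last by move=> x /(_ i Logic.I).
by apply: closed_bigI => j _; case: (hg j).
Qed.

HB.instance Definition _ := isOpenTopological.Build (plus_f f) opT opI op_bigU.

End Glue.

From HB Require Import structures.
From mathcomp Require Import all_boot all_order.
From mathcomp Require Import all_classical all_reals all_analysis.
Set Implicit Arguments. Unset Strict Implicit. Unset Printing Implicit Defensive.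
Local Open Scope classical_set_scope.

(* A subset of X +_f Y is a glued set A + C with A in X and C in Y; it is
   closed iff A and C are closed and f A is contained in C.  If X +_f Y is
   Hausdorff, inl K is compact for compact K, hence closed, so f K lies in
   its empty Y-part; and disjoint open neighbourhoods U, V of two points of
   Y give the closed cover of X by the X-parts of ~` V and ~` U.
   Conversely, points of X are separated inside X, a point x of X is
   separated from Y by a compact neighbourhood W (since f W is empty, inl W
   is closed), and two points a, b of Y are separated by the complements of
   B + (f B \/ ~` U) and A + (f A \/ ~` V). *)

Definition open_separated (T : topologicalType) (p q : T) : Prop :=
  exists U V : set T, [/\ open U, open V, U p, V q & U `&` V = set0].

Lemma open_separated_sym (T : topologicalType) (p q : T) :
  open_separated p q -> open_separated q p.
Proof. by move=> [U [V [oU oV Up Vq UV0]]]; exists V, U; rewrite setIC. Qed.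

Lemma hausdorffP (T : topologicalType) :
  hausdorff_space T <-> forall p q : T, p <> q -> open_separated p q.
Proof.
rewrite open_hausdorff; split=> hT p q /eqP pq.
  have [[U V] /= [Up Vq] [oU oV /eqP UV0]] := hT p q pq.
  by exists U, V; split; rewrite // -inE.
have [U [V [oU oV Up Vq UV0]]] := hT p q pq.
by exists (U, V); rewrite /= ?inE//; split=> //; apply/eqP.
Qed.

Section GluedSets.
Variables (X Y : topologicalType) (f : admissible_map X Y).

Definition glue_set (A : set X) (C : set Y) : set (plus_f f) :=
  fun z => match z with inl x => A x | inr y => C y end.

Lemma open_plusE (D : set (plus_f f)) : open D <-> glue_closed f (~` D).
Proof. by []. Qed.

Lemma closed_plusE (D : set (plus_f f)) : closed D <-> glue_closed f D.
Proof. by rewrite -openC open_plusE setCK. Qed.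

Lemma closed_glue_set (A : set X) (C : set Y) :
  closed (glue_set A C) <-> [/\ closed A, closed C & f A `<=` C].
Proof. exact: closed_plusE. Qed.

Lemma setC_glue_set (A : set X) (C : set Y) :
  ~` glue_set A C = glue_set (~` A) (~` C).
Proof. by apply/funext => -[]. Qed.

Lemma setI_glue_set (A A' : set X) (C C' : set Y) :
  glue_set A C `&` glue_set A' C' = glue_set (A `&` A') (C `&` C').
Proof. by apply/funext => -[]. Qed.

Lemma glue_set0 : glue_set set0 set0 = set0.
Proof. by apply/funext => -[]. Qed.

Lemma open_glue_set (A : set X) (C : set Y) :
  open (glue_set A C) <-> [/\ open A, open C & f (~` A) `<=` ~` C].
Proof. by rewrite -closedC setC_glue_set closed_glue_set !closedC. Qed.

Lemma open_glue_setl (A : set X) : open A -> open (glue_set A set0).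
Proof.
by move=> oA; apply/open_glue_set; split=> //; [exact: open0|move=> ? _ []].
Qed.

Lemma open_glue_setC (B : set X) (U : set Y) : closed B -> open U ->
  open (glue_set (~` B) (~` f B `&` U)).
Proof.
have [fcl _ _] := amapP f; move=> cB oU.
apply/open_glue_set; rewrite openC setCK; split=> //; last by move=> y fBy [].
by apply: openI => //; rewrite openC; exact: fcl.
Qed.

Lemma image_inl (A : set X) : inl @` A = glue_set A set0.
Proof.
apply/seteqP; split=> [_ [x Ax <-] //|[x Ax|//]].
by exists x.
Qed.

Lemma continuous_inl : continuous (inl : X -> plus_f f).
Proof.
by apply/continuousP => U /open_plusE [cU _ _]; rewrite -closedC.
Qed.

End GluedSets.
Arguments glue_set {X Y} f.

Section HausdorffNecessary.
Variables (X Y : topologicalType) (f : admissible_map X Y).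
Hypothesis hausdorff_plus : hausdorff_space (plus_f f).

Lemma compact_amap_eq0 (K : set X) : compact K -> f K = set0.
Proof.
move=> cK; have : compact (glue_set f K set0).
  rewrite -image_inl; apply: continuous_compact => //.
  exact/continuous_subspaceT/continuous_inl.
move=> /(compact_closed hausdorff_plus) /closed_glue_set [_ _ fK].
by rewrite -subset0.
Qed.

Lemma separating_closed_cover (a b : Y) : a <> b ->
  exists A B : set X,
    [/\ closed A, closed B, A `|` B = setT, ~ f A b & ~ f B a].
Proof.
move=> ab; have /hausdorffP/(_ (inr a) (inr b)) := hausdorff_plus.
case=> [[] //|U [V [/open_plusE [cU _ fU] /open_plusE [cV _ fV] Ua Vb UV0]]].
exists (inl @^-1` ~` V), (inl @^-1` ~` U); split=> //.
- apply/seteqP; split=> // x _ /=.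
  have [Vx|] := pselect (V (inl x)); [right=> Ux|by left].
  by have : (U `&` V) (inl x) by []; rewrite UV0.
- by move=> /fV.
- by move=> /fU.
Qed.

End HausdorffNecessary.

Section HausdorffSufficient.
Variables (X Y : topologicalType) (f : admissible_map X Y).

Lemma open_separated_inl (x x' : X) : hausdorff_space X -> x <> x' ->
  open_separated (inl x : plus_f f) (inl x').
Proof.
move=> /hausdorffP hX /hX [U [V [oU oV Ux Vx' UV0]]].
exists (glue_set f U set0), (glue_set f V set0).
by rewrite setI_glue_set UV0 setI0 glue_set0; split=> //; exact: open_glue_setl.
Qed.

Lemma open_separated_inl_inr (x : X) (y : Y) :
  locally_compact [set: X] -> (forall K : set X, compact K -> f K = set0) ->
  open_separated (inl x : plus_f f) (inr y).
Proof.
move=> lcX fK0; have [W] := lcX x I; rewrite withinET nbhsE => -[B [oB Bx] BW].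
move=> [cW clW]; exists (glue_set f B set0), (glue_set f (~` W) setT); split=> //.
- exact: open_glue_setl.
- by apply/open_glue_set; rewrite openC setCK fK0//; split=> //; exact: openT.
- by rewrite setI_glue_set set0I; apply/seteqP; split=> // -[z [/BW]|].
Qed.

Lemma open_separated_inr (a b : Y) : hausdorff_space Y -> a <> b ->
  (exists A B : set X,
    [/\ closed A, closed B, A `|` B = setT, ~ f A b & ~ f B a]) ->
  open_separated (inr a : plus_f f) (inr b).
Proof.
move=> /hausdorffP hY ab [A [B [cA cB AB nfAb nfBa]]].
have [U [V [oU oV Ua Vb UV0]]] := hY a b ab.
exists (glue_set f (~` B) (~` f B `&` U)), (glue_set f (~` A) (~` f A `&` V)).
split=> //; [exact: open_glue_setC|exact: open_glue_setC|].
rewrite setI_glue_set; apply/seteqP; split=> // -[x [nBx nAx]|y [[_ Uy] [_ Vy]]].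
- by have [] : (A `|` B) x by rewrite AB.
- by have : (U `&` V) y by []; rewrite UV0.
Qed.

End HausdorffSufficient.

Theorem mainTheorem11 (X Y : topologicalType) (f : admissible_map X Y) :
  hausdorff_space X -> hausdorff_space Y -> locally_compact [set: X] ->
  (hausdorff_space (plus_f f) <->
   ((forall K : set X, compact K -> f K = set0) /\
    (forall a b : Y, a <> b ->
       exists A B : set X, [/\ closed A, closed B, A `|` B = setT,
                              ~ f A b & ~ f B a]))).
Proof.
move=> hX hY lcX; split=> [hP|[fK0 fsep]].
  by split; [exact: compact_amap_eq0|exact: separating_closed_cover].
apply/hausdorffP => -[x|a] [x'|b] pq.
- by apply: open_separated_inl => // e; apply: pq; rewrite e.
- exact: open_separated_inl_inr.
- exact/open_separated_sym/open_separated_inl_inr.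
- have ab : a <> b by move=> e; apply: pq; rewrite e.
  exact: open_separated_inr (fsep a b ab).
Qed.
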